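(* Let $I$ be a set of players with $|I|\ge2$ and $S$ a set of states of nature with $|S|\ge2$. Then there is no weak-universal $\infty$-type space on $S$ for player set $I$, and there is no weak-universal $*$-type space on $S$ for player set $I$.
   Context: An $\infty$-field on a nonempty set $M$ is a field of subsets closed under arbitrary intersections. For an $\infty$-field $\Sigma$ on $M$, $\Delta^\infty(M,\Sigma)$ is the set of finitely additive probability measures on $(M,\Sigma)$, endowed with the $\infty$-field generated by the sets $\{\mu:\mu(E)\ge p\}$, $E\in\Sigma$, $p\in[0,1]$. An $\infty$-type space on $S$ for $I$ is $\langle M,\Sigma,(T_i)_{i\in I},\theta\rangle$ with $M$ nonempty, $\Sigma$ an $\infty$-field on $M$, each $T_i:M\to\Delta^\infty(M,\Sigma)$ measurable such that for all $m\in M$, $A\in\Sigma$: $\{m':T_i(m')=T_i(m)\}\subseteq A$ implies $T_i(m)(A)=1$; and $\theta:M\to S$ $\Sigma$–$\mathrm{Pow}(S)$-measurable. A $*$-type space on $S$ for $I$ is $\langle M,(T_i)_{i\in I},\theta\rangle$ with $M$ nonempty, each $T_i$ a function from $M$ to finitely additive probability measures on $(M,\mathrm{Pow}(M))$ with $T_i(m)(\{m':T_i(m')=T_i(m)\})=1$, and $\theta:M\to S$ any function. A type morphism from $\langle M',\Sigma',(T'_i),\theta'\rangle$ to $\langle M,\Sigma,(T_i),\theta\rangle$ (for $*$-type spaces take $\Sigma=\mathrm{Pow}(M)$) is a $\Sigma'$–$\Sigma$-measurable $f:M'\to M$ with $\theta'(m')=\theta(f(m'))$ and $T_i(f(m'))(E)=T'_i(m')(f^{-1}(E))$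 for all $m'$, $E\in\Sigma$, $i\in I$. An $\infty$-type space (resp. $*$-type space) is weak-universal if every $\infty$-type space (resp. $*$-type space) on $S$ for $I$ admits some type morphism into it. *)

From Stdlib Require Import Reals.
Open Scope R_scope.

Set Implicit Arguments.

Definition inf_field (M : Type) (Sig : (M -> Prop) -> Prop) : Prop :=
  Sig (fun _ => True) /\
  (forall A, Sig A -> Sig (fun m => ~ A m)) /\
  (forall A B, Sig A -> Sig B -> Sig (fun m => A m \/ B m)) /\
  (forall F : (M -> Prop) -> Prop, (forall A, F A -> Sig A) ->
     Sig (fun m => forall A, F A -> A m)).

Definition gen_inf_field (M : Type) (G : (M -> Prop) -> Prop) : (M -> Prop) -> Prop :=
  fun A => forall Sig, inf_field Sig -> (forall B, G B -> Sig B) -> Sig A.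

(** Finitely additive probability measure on (M, Sig).  It is represented as
    a function on all subsets, normalized to be 0 outside Sig, so that
    (Leibniz) equality of measures is equality on Sig. *)
Definition fapm (M : Type) (Sig : (M -> Prop) -> Prop) (mu : (M -> Prop) -> R) : Prop :=
  (forall A, Sig A -> 0 <= mu A) /\
  mu (fun _ => True) = 1 /\
  (forall A B, Sig A -> Sig B -> (forall m, A m -> B m -> False) ->
     mu (fun m => A m \/ B m) = mu A + mu B) /\
  (forall A, ~ Sig A -> mu A = 0).

Definition Delta (M : Type) (Sig : (M -> Prop) -> Prop) : Type :=
  { mu : (M -> Prop) -> R | fapm Sig mu }.

Definition meas_val (M : Type) (Sig : (M -> Prop) -> Prop) (mu : Delta Sig)
  (A : M -> Prop) : R := proj1_sig mu A.

Definition Delta_field (M : Type) (Sig : (M -> Prop) -> Prop) :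
  (Delta Sig -> Prop) -> Prop :=
  gen_inf_field (fun B : Delta Sig -> Prop =>
    exists E p, Sig E /\ 0 <= p <= 1 /\
      forall mu, B mu <-> meas_val mu E >= p).

Definition measurable_map (X Y : Type) (SX : (X -> Prop) -> Prop)
  (SY : (Y -> Prop) -> Prop) (f : X -> Y) : Prop :=
  forall B, SY B -> SX (fun x => B (f x)).

Record InfTS (S I : Type) := {
  its_M : Type;
  its_ne : inhabited its_M;
  its_Sig : (its_M -> Prop) -> Prop;
  its_field : inf_field its_Sig;
  its_T : I -> its_M -> Delta its_Sig;
  its_T_meas : forall i, measurable_map its_Sig (@Delta_field its_M its_Sig) (its_T i);
  its_intro : forall i m A, its_Sig A ->
    (forall m', its_T i m' = its_T i m -> A m') -> meas_val (its_T i m) A = 1;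
  its_theta : its_M -> S;
  its_theta_meas : measurable_map its_Sig (fun _ : S -> Prop => True) its_theta
}.

Definition inf_type_morphism (S I : Type) (V U : InfTS S I)
  (f : its_M V -> its_M U) : Prop :=
  measurable_map (its_Sig V) (its_Sig U) f /\
  (forall m', its_theta V m' = its_theta U (f m')) /\
  (forall m' E i, its_Sig U E ->
     meas_val (its_T U i (f m')) E = meas_val (its_T V i m') (fun x => E (f x))).

Definition inf_weak_universal (S I : Type) (U : InfTS S I) : Prop :=
  forall V : InfTS S I, exists f, inf_type_morphism V U f.

Definition powset (M : Type) : (M -> Prop) -> Prop := fun _ => True.

Record StarTS (S I : Type) := {
  sts_M : Type;
  sts_ne : inhabited sts_M;
  sts_T : I -> sts_M -> Delta (@powset sts_M);
  sts_intro : forall i m,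
    meas_val (sts_T i m) (fun m' => sts_T i m' = sts_T i m) = 1;
  sts_theta : sts_M -> S
}.

Definition star_type_morphism (S I : Type) (V U : StarTS S I)
  (f : sts_M V -> sts_M U) : Prop :=
  (forall m', sts_theta V m' = sts_theta U (f m')) /\
  (forall m' (E : sts_M U -> Prop) i,
     meas_val (sts_T U i (f m')) E = meas_val (sts_T V i m') (fun x => E (f x))).

Definition star_weak_universal (S I : Type) (U : StarTS S I) : Prop :=
  forall V : StarTS S I, exists f, star_type_morphism V U f.

(* Suppose f is a type morphism into a candidate universal space U from the
   following space.  Its points are copies [Copy u] of the points of U and, for
   u in U, P a set of points of U and L a nonempty list of points of U, points
   [Echo u L] and [Code P L].  Except for player i2, [Echo u L] looks exactly
   like u; at both [Echo u L] and [Code P L] player i2 spreads his belief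
   uniformly over the [Echo x L], x in L.  At [Code P L] the other players are
   certain, through an ultrafilter on the lists with elements in P that contains,
   for each y in P, the lists through y, that i2 gives positive weight to a
   point looking like y exactly when y is in P; the state tells whether P is
   empty.  Hence, on sets that are closed under "looking alike", the belief of
   player i1 at f (Code P L) determines P, which is impossible by Cantor's
   diagonal argument. *)

From Stdlib Require Import Reals Lra List.
From Stdlib Require Import Classical ClassicalEpsilon FunctionalExtensionality PropExtensionality.
From mathcomp Require filter.

Set Bullet Behavior "Strict Subproofs".

Lemma pred_ext {X : Type} (A B : X -> Prop) : (forall x, A x <-> B x) -> A = B.
Proof.
  intros H. apply functional_extensionality. intros x.
  apply propositional_extensionality, H.
Qed.

Section InfFields.
Context {X : Type} {Sig : (X -> Prop) -> Prop}.

Lemma inf_field_ext {A B} : Sig A -> (forall x, A x <-> B x) -> Sig B.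
Proof. intros HA E. rewrite <- (pred_ext A B E). exact HA. Qed.

Hypothesis HF : inf_field Sig.

Lemma inf_field_full : Sig (fun _ => True).
Proof. apply HF. Qed.

Lemma inf_field_compl {A} : Sig A -> Sig (fun x => ~ A x).
Proof. apply HF. Qed.

Lemma inf_field_union {A B} : Sig A -> Sig B -> Sig (fun x => A x \/ B x).
Proof. apply HF. Qed.

Lemma inf_field_bigcap (F : (X -> Prop) -> Prop) :
  (forall A, F A -> Sig A) -> Sig (fun x => forall A, F A -> A x).
Proof. apply HF. Qed.

Lemma inf_field_inter {A B} : Sig A -> Sig B -> Sig (fun x => A x /\ B x).
Proof.
  intros HA HB.
  apply (inf_field_ext (inf_field_compl (inf_field_union
    (inf_field_compl HA) (inf_field_compl HB)))).
  intros x. split; [intros H; split; apply NNPP; tauto | tauto].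
Qed.

End InfFields.

Lemma inf_field_gen {X : Type} (G : (X -> Prop) -> Prop) : inf_field (gen_inf_field G).
Proof.
  split; [| split; [| split]].
  - intros Sig HS _. apply HS.
  - intros A HA Sig HS HG. apply HS, HA; auto.
  - intros A B HA HB Sig HS HG. apply HS; [apply HA | apply HB]; auto.
  - intros F HFam Sig HS HG. apply HS. intros A HA. apply HFam; auto.
Qed.

Lemma gen_inf_field_sub {X : Type} (G : (X -> Prop) -> Prop) B :
  G B -> gen_inf_field G B.
Proof. intros HB Sig _ HG. auto. Qed.

Lemma powset_inf_field (X : Type) : inf_field (@powset X).
Proof. repeat split. Qed.

Section Measures.
Context {X : Type} {Sig : (X -> Prop) -> Prop}.
Implicit Types (mu : Delta Sig) (A B E : X -> Prop).

Lemma meas_val_out mu A : ~ Sig A -> meas_val mu A = 0.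
Proof. apply (proj2_sig mu). Qed.

Lemma meas_val_ge0 mu A : 0 <= meas_val mu A.
Proof.
  destruct (classic (Sig A)) as [HA | HA].
  - apply (proj2_sig mu), HA.
  - rewrite meas_val_out by exact HA. lra.
Qed.

Lemma meas_val_full mu : meas_val mu (fun _ => True) = 1.
Proof. apply (proj2_sig mu). Qed.

Lemma meas_val_union mu {A B} : Sig A -> Sig B -> (forall x, A x -> B x -> False) ->
  meas_val mu (fun x => A x \/ B x) = meas_val mu A + meas_val mu B.
Proof. apply (proj2_sig mu). Qed.

Hypothesis HF : inf_field Sig.

Lemma meas_val_compl mu {A} : Sig A -> meas_val mu A + meas_val mu (fun x => ~ A x) = 1.
Proof.
  intros HA. rewrite <- (meas_val_union mu HA (inf_field_compl HF HA)) by auto.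
  rewrite <- (meas_val_full mu). f_equal. apply pred_ext. intros x.
  split; [auto | intros _; apply classic].
Qed.

Lemma meas_val_le1 mu A : meas_val mu A <= 1.
Proof.
  destruct (classic (Sig A)) as [HA | HA].
  - pose proof (meas_val_compl mu HA). pose proof (meas_val_ge0 mu (fun x => ~ A x)). lra.
  - rewrite meas_val_out by exact HA. lra.
Qed.

Lemma meas_val_mono mu {A B} : Sig A -> Sig B -> (forall x, A x -> B x) ->
  meas_val mu A <= meas_val mu B.
Proof.
  intros HA HB AB.
  replace B with (fun x => A x \/ (B x /\ ~ A x)).
  - rewrite meas_val_union; auto.
    + pose proof (meas_val_ge0 mu (fun x => B x /\ ~ A x)). lra.
    + apply (inf_field_inter HF HB (inf_field_compl HF HA)).
    + intros x Ax [_ nAx]. auto.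
  - apply pred_ext. intros x. split; [intros [H | [H _]]; auto |].
    intros Bx. destruct (classic (A x)); auto.
Qed.

Lemma Delta_field_level {E} c : Sig E -> 0 <= c <= 1 ->
  Delta_field (fun nu : Delta Sig => meas_val nu E = c).
Proof.
  intros HE Hc.
  assert (Hge : Delta_field (fun nu : Delta Sig => meas_val nu E >= c)).
  { apply gen_inf_field_sub. exists E, c. repeat split; auto; tauto. }
  assert (Hle : Delta_field (fun nu : Delta Sig => meas_val nu (fun x => ~ E x) >= 1 - c)).
  { apply gen_inf_field_sub. exists (fun x => ~ E x), (1 - c).
    repeat split; try lra; try tauto. apply (inf_field_compl HF HE). }
  apply (inf_field_ext (inf_field_inter (inf_field_gen _) Hge Hle)).
  intros nu. pose proof (meas_val_compl nu HE).
  split; [intros [? ?] | intros ?; split]; lra.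
Qed.

Lemma Delta_field_agree_on (F : (X -> Prop) -> Prop) (nu0 : Delta Sig) :
  Delta_field (fun nu : Delta Sig => forall E, F E -> meas_val nu E = meas_val nu0 E).
Proof.
  refine (inf_field_ext (inf_field_bigcap (inf_field_gen _)
    (fun Q => exists E, F E /\ Q = fun nu : Delta Sig => meas_val nu E = meas_val nu0 E) _)
    _).
  - intros Q [E [_ ->]]. destruct (classic (Sig E)) as [HE | HE].
    + apply Delta_field_level; auto. split; [apply meas_val_ge0 | apply meas_val_le1].
    + apply (inf_field_ext (inf_field_full (inf_field_gen _))).
      intros nu. rewrite !meas_val_out by exact HE. tauto.
  - intros nu. split.
    + intros H E HE. apply (H (fun nu => meas_val nu E = meas_val nu0 E)). eauto.
    + intros H Q [E [HE ->]]. auto.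
Qed.

Lemma Delta_field_pos {E} : Sig E -> Delta_field (fun nu : Delta Sig => meas_val nu E > 0).
Proof.
  intros HE.
  apply (inf_field_ext (inf_field_compl (inf_field_gen _)
    (Delta_field_level 0 HE (conj (Rle_refl 0) Rle_0_1)))).
  intros nu. destruct (Rle_lt_or_eq_dec _ _ (meas_val_ge0 nu E)); split; intros H; lra.
Qed.

End Measures.

Definition restrict {X : Type} (Sig : (X -> Prop) -> Prop) (m : (X -> Prop) -> R)
  (A : X -> Prop) : R :=
  if excluded_middle_informative (Sig A) then m A else 0.

Lemma restrict_in {X : Type} (Sig : (X -> Prop) -> Prop) m A :
  Sig A -> @restrict X Sig m A = m A.
Proof. unfold restrict. destruct (excluded_middle_informative (Sig A)); tauto. Qed.

Lemma fapm_restrict {X : Type} {Sig : (X -> Prop) -> Prop} {m} :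
  inf_field Sig -> fapm (@powset X) m -> fapm Sig (restrict Sig m).
Proof.
  intros HF [Hpos [Hfull [Hadd _]]]. split; [| split; [| split]].
  - intros A HA. rewrite restrict_in by exact HA. apply Hpos, I.
  - rewrite restrict_in by apply (inf_field_full HF). exact Hfull.
  - intros A B HA HB D.
    rewrite !restrict_in by (try apply (inf_field_union HF); auto).
    apply Hadd; [exact I | exact I | exact D].
  - intros A HA. unfold restrict.
    destruct (excluded_middle_informative (Sig A)); tauto.
Qed.

Definition comap {X Y : Type} (c : X -> Y) (Sig : (X -> Prop) -> Prop) :
  (Y -> Prop) -> Prop :=
  fun A => Sig (fun x => A (c x)).

Lemma inf_field_comap {X Y : Type} (c : X -> Y) Sig :
  inf_field Sig -> inf_field (comap c Sig).
Proof.
  intros HF. split; [| split; [| split]]; unfold comap.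
  - apply (inf_field_full HF).
  - intros A. apply (inf_field_compl HF).
  - intros A B. apply (inf_field_union HF).
  - intros F HFam.
    refine (inf_field_ext (inf_field_bigcap HF
      (fun B => exists A, F A /\ B = fun x => A (c x)) _) _).
    + intros B [A [HA ->]]. auto.
    + intros x. split.
      * intros H A HA. apply (H (fun x => A (c x))). eauto.
      * intros H B [A [HA ->]]. apply H, HA.
Qed.

Definition push {X Y : Type} (c : X -> Y) (m : (X -> Prop) -> R) : (Y -> Prop) -> R :=
  fun A => m (fun x => A (c x)).

Lemma fapm_push {X Y : Type} (c : X -> Y) {Sig m} :
  fapm Sig m -> fapm (comap c Sig) (push c m).
Proof.
  intros [Hpos [Hfull [Hadd Hout]]]. split; [| split; [| split]].
  - intros A HA. exact (Hpos _ HA).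
  - exact Hfull.
  - intros A B HA HB D. exact (Hadd _ _ HA HB (fun x => D (c x))).
  - intros A HA. exact (Hout _ HA).
Qed.

Definition Delta_push {X Y : Type} (c : X -> Y) {Sig : (X -> Prop) -> Prop}
  (mu : Delta Sig) : Delta (comap c Sig) :=
  exist _ (push c (proj1_sig mu)) (fapm_push c (proj2_sig mu)).

Lemma Delta_field_push {X Y : Type} (c : X -> Y) {Sig : (X -> Prop) -> Prop}
  (B : Delta (comap c Sig) -> Prop) :
  Delta_field B -> Delta_field (fun mu : Delta Sig => B (Delta_push c mu)).
Proof.
  intros HB. apply (HB (comap (Delta_push c) (@Delta_field X Sig))).
  - apply inf_field_comap, inf_field_gen.
  - intros B' [E [p [HE [Hp HB']]]]. apply gen_inf_field_sub.
    exists (fun x => E (c x)), p. split; [exact HE | split; [exact Hp |]].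
    intros mu. apply HB'.
Qed.

Definition ind (P : Prop) : R := if excluded_middle_informative P then 1 else 0.

Lemma ind_true (P : Prop) : P -> ind P = 1.
Proof. unfold ind. destruct (excluded_middle_informative P); tauto. Qed.

Lemma ind_false (P : Prop) : ~ P -> ind P = 0.
Proof. unfold ind. destruct (excluded_middle_informative P); tauto. Qed.

Lemma ind_eq1 (P : Prop) : ind P = 1 <-> P.
Proof.
  unfold ind. destruct (excluded_middle_informative P); split; intros; tauto || lra.
Qed.

Lemma ind_ge0 (P : Prop) : 0 <= ind P.
Proof. unfold ind. destruct (excluded_middle_informative P); lra. Qed.

Definition ultra_meas {X : Type} (F : (X -> Prop) -> Prop) (A : X -> Prop) : R :=
  ind (F A).

Lemma fapm_ultra_meas {X : Type} {F : (X -> Prop) -> Prop} :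
  filter.UltraFilter F -> fapm (@powset X) (ultra_meas F).
Proof.
  intros HU. unfold ultra_meas. split; [| split; [| split]].
  - intros A _. apply ind_ge0.
  - apply ind_true, filter.filterT.
  - intros A B _ _ D.
    assert (HAB : F A -> F B -> False).
    { intros FA FB. apply (@filter.filter_not_empty _ F _).
      exact (filter.filterS2 _ (fun x Ax Bx => D x Ax Bx) FA FB). }
    destruct (classic (F A)) as [FA | nFA]; destruct (classic (F B)) as [FB | nFB].
    + tauto.
    + rewrite ind_true, ind_true, ind_false; auto; [lra |].
      exact (filter.filterS (fun x Ax => or_introl Ax) FA).
    + rewrite ind_true, ind_false, ind_true; auto; [lra |].
      exact (filter.filterS (fun x Bx => or_intror Bx) FB).
    + rewrite !ind_false; auto; [lra |]. intros FAB.
      destruct (filter.in_ultra_setVsetC A HU) as [? | FnA]; [tauto |].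
      destruct (filter.in_ultra_setVsetC B HU) as [? | FnB]; [tauto |].
      apply (@filter.filter_not_empty _ F _).
      refine (filter.filterS2 _ _ FAB (filter.filterI FnA FnB)).
      intros x [Ax | Bx] [nAx nBx]; [exact (nAx Ax) | exact (nBx Bx)].
  - intros A HA. exfalso. apply HA, I.
Qed.

Fixpoint count_sat {X : Type} (A : X -> Prop) (xs : list X) : R :=
  match xs with
  | nil => 0
  | x :: xs' => ind (A x) + count_sat A xs'
  end.

Lemma count_sat_ge0 {X : Type} (A : X -> Prop) xs : 0 <= count_sat A xs.
Proof. induction xs as [| x xs IH]; simpl; [lra |]. pose proof (ind_ge0 (A x)). lra. Qed.

Lemma count_sat_all {X : Type} (A : X -> Prop) xs :
  (forall x, In x xs -> A x) -> count_sat A xs = INR (length xs).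
Proof.
  induction xs as [| x xs IH]; intros H; [reflexivity |].
  cbn [count_sat length]. rewrite S_INR, ind_true, IH by (intros; apply H; simpl; auto).
  lra.
Qed.

Lemma count_sat_or {X : Type} (A B : X -> Prop) xs : (forall x, A x -> B x -> False) ->
  count_sat (fun x => A x \/ B x) xs = count_sat A xs + count_sat B xs.
Proof.
  intros D. induction xs as [| x xs IH]; simpl; [lra |]. rewrite IH.
  destruct (classic (A x)) as [Ax | nAx]; [| destruct (classic (B x)) as [Bx | nBx]].
  - rewrite (ind_true (A x \/ B x)), (ind_true (A x)), (ind_false (B x)); eauto. lra.
  - rewrite (ind_true (A x \/ B x)), (ind_false (A x)), (ind_true (B x)); auto. lra.
  - rewrite (ind_false (A x \/ B x)), (ind_false (A x)), (ind_false (B x)); try tauto. lra.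
Qed.

Lemma count_sat_pos {X : Type} (A : X -> Prop) xs :
  count_sat A xs > 0 <-> exists x, In x xs /\ A x.
Proof.
  induction xs as [| x xs IH]; simpl.
  - split; [lra | intros [y [[] _]]].
  - pose proof (count_sat_ge0 A xs). destruct (classic (A x)) as [Ax | nAx].
    + rewrite ind_true by exact Ax. split; [eauto | lra].
    + rewrite ind_false by exact nAx. rewrite Rplus_0_l, IH. split.
      * intros [y [Hy Ay]]. eauto.
      * intros [y [[<- | Hy] Ay]]; [tauto | eauto].
Qed.

Definition uniform {X : Type} (xs : list X) (A : X -> Prop) : R :=
  count_sat A xs / INR (length xs).

Section Uniform.
Context {X : Type} {xs : list X} (Hxs : xs <> nil).

Let length_pos : 0 < INR (length xs).
Proof. destruct xs; [congruence |]. apply lt_0_INR. simpl. apply Nat.lt_0_succ. Qed.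

Lemma uniform_all A : (forall x, In x xs -> A x) -> uniform xs A = 1.
Proof.
  intros H. unfold uniform. rewrite count_sat_all by exact H.
  field. apply Rgt_not_eq, length_pos.
Qed.

Lemma uniform_pos A : uniform xs A > 0 <-> exists x, In x xs /\ A x.
Proof.
  rewrite <- count_sat_pos. unfold uniform.
  pose proof length_pos.
  split; intros Hpos.
  - destruct (Rle_lt_or_eq_dec _ _ (count_sat_ge0 A xs)) as [| E]; [lra |].
    rewrite <- E in Hpos. unfold Rdiv in Hpos. lra.
  - apply Rdiv_lt_0_compat; lra.
Qed.

Lemma fapm_uniform : fapm (@powset X) (uniform xs).
Proof.
  split; [| split; [| split]].
  - intros A _. apply Rmult_le_pos; [apply count_sat_ge0 |].
    left. apply Rinv_0_lt_compat, length_pos.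
  - apply uniform_all. auto.
  - intros A B _ _ D. unfold uniform. rewrite count_sat_or by exact D. field.
    apply Rgt_not_eq, length_pos.
  - intros A HA. exfalso. apply HA, I.
Qed.

End Uniform.

Definition nelist (X : Type) : Type := (X * list X)%type.

Definition elems {X : Type} (L : nelist X) : list X := fst L :: snd L.

Lemma map_elems_neq_nil {X Y : Type} (f : X -> Y) (L : nelist X) : map f (elems L) <> nil.
Proof. discriminate. Qed.

Definition covering {X : Type} (P : X -> Prop) (F : (nelist X -> Prop) -> Prop) : Prop :=
  F (fun L => forall z, In z (elems L) -> P z) /\
  forall y, P y -> F (fun L => In y (elems L)).

Lemma covering_ultrafilter_exists {X : Type} {P : X -> Prop} :
  (exists y, P y) -> exists F, filter.UltraFilter F /\ covering P F.
Proof.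
  intros [p Hp].
  pose (D := fun ys : list X => forall y, In y ys -> P y).
  pose (B := fun (ys : list X) (L : nelist X) =>
    (forall y, In y ys -> In y (elems L)) /\ forall z, In z (elems L) -> P z).
  assert (HB : filter.ProperFilter (filter.filter_from D B)).
  { apply filter.filter_from_proper.
    - apply filter.filter_from_filter.
      + exists nil. intros y [].
      + intros ys zs Hys Hzs. exists (ys ++ zs).
        * intros y Hy. apply in_app_or in Hy. destruct Hy; auto.
        * intros L [Hsub HP]. split; split; auto; intros y Hy; apply Hsub, in_or_app; auto.
    - intros ys Hys. exists (p, ys). split.
      + intros y Hy. simpl. auto.
      + intros z [<- | Hz]; auto. }
  destruct (filter.ultraFilterLemma HB) as [F [HF Hsub]].
  exists F. split; [exact HF | split].
  - apply Hsub. exists nil; [intros y [] |]. intros L [_ HL]. exact HL.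
  - intros y Hy. apply Hsub. exists (y :: nil).
    + intros z [<- | []]. exact Hy.
    + intros L [HL _]. apply HL. simpl. auto.
Qed.

Lemma covering_exists_in {X : Type} {P Q : X -> Prop} {F : (nelist X -> Prop) -> Prop} :
  filter.ProperFilter F -> covering P F ->
  (F (fun L => exists x, In x (elems L) /\ Q x) <-> exists x, P x /\ Q x).
Proof.
  intros HF [Hin Hall]. split.
  - intros HQ.
    destruct (filter.filter_ex (filter.filterI HQ Hin)) as [L [[x [Hx Qx]] HL]].
    exists x. auto.
  - intros [x [Px Qx]]. refine (filter.filterS _ (Hall x Px)).
    intros L Hx. exists x. auto.
Qed.

Section DiagonalSpace.
Context {S I : Type} (i2 : I) (s0 t0 : S) (U : InfTS S I).

Local Notation M := (its_M U).
Local Notation Sig := (its_Sig U).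
Local Notation T := (its_T U).

Inductive point : Type :=
  | Copy (u : M)
  | Echo (u : M) (L : nelist M)
  | Code (P : M -> Prop) (L : nelist M).

Definition diag_Sig : (point -> Prop) -> Prop := comap Copy Sig.

Lemma diag_Sig_field : inf_field diag_Sig.
Proof. apply inf_field_comap, its_field. Qed.

(* For empty P any ultrafilter will do: the state [t0] singles these points out. *)
Definition code_filter (P : M -> Prop) : (nelist M -> Prop) -> Prop :=
  epsilon (inhabits (fun _ => True))
    (fun F => filter.UltraFilter F /\ ((exists y, P y) -> covering P F)).

Lemma code_filter_spec P :
  filter.UltraFilter (code_filter P) /\ ((exists y, P y) -> covering P (code_filter P)).
Proof.
  refine (epsilon_spec _
    (fun F => filter.UltraFilter F /\ ((exists y, P y) -> covering P F)) _).
  destruct (classic (exists y, P y)) as [HP | HP].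
  - destruct (covering_ultrafilter_exists HP) as [F [HF Hcov]]. exists F. auto.
  - destruct (its_ne U) as [u]. exists (filter.principal_filter ((u, nil) : nelist M)).
    split; [apply filter.principal_filter_ultra | tauto].
Qed.

Definition echo_belief (L : nelist M) : Delta diag_Sig :=
  exist _ (restrict diag_Sig (uniform (map (fun x => Echo x L) (elems L))))
    (fapm_restrict diag_Sig_field (fapm_uniform (map_elems_neq_nil _ L))).

Definition code_belief (P : M -> Prop) : Delta diag_Sig :=
  exist _ (restrict diag_Sig (push (fun L => Code P L) (ultra_meas (code_filter P))))
    (fapm_restrict diag_Sig_field
      (fapm_push _ (fapm_ultra_meas (proj1 (code_filter_spec P))))).

Definition diag_T (i : I) (w : point) : Delta diag_Sig :=
  match w with
  | Copy u => Delta_push Copy (T i u)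
  | Echo u L =>
      if excluded_middle_informative (i = i2) then echo_belief L
      else Delta_push Copy (T i u)
  | Code P L =>
      if excluded_middle_informative (i = i2) then echo_belief L else code_belief P
  end.

Definition diag_theta (w : point) : S :=
  match w with
  | Copy u | Echo u _ => its_theta U u
  | Code P _ => if excluded_middle_informative (exists y, P y) then s0 else t0
  end.

Lemma diag_T_Echo_i2 u L : diag_T i2 (Echo u L) = echo_belief L.
Proof. simpl. destruct (excluded_middle_informative (i2 = i2)); congruence. Qed.

Lemma diag_T_Code_i2 P L : diag_T i2 (Code P L) = echo_belief L.
Proof. simpl. destruct (excluded_middle_informative (i2 = i2)); congruence. Qed.

Lemma diag_T_Echo i u L : i <> i2 -> diag_T i (Echo u L) = Delta_push Copy (T i u).
Proof. intros Hi. simpl. destruct (excluded_middle_informative (i = i2)); congruence. Qed.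

Lemma diag_T_Code i P L : i <> i2 -> diag_T i (Code P L) = code_belief P.
Proof. intros Hi. simpl. destruct (excluded_middle_informative (i = i2)); congruence. Qed.

Lemma diag_T_meas i : measurable_map diag_Sig (@Delta_field point diag_Sig) (diag_T i).
Proof.
  intros B HB. apply (its_T_meas U i (B := fun mu => B (Delta_push Copy mu))).
  apply Delta_field_push, HB.
Qed.

Lemma diag_theta_meas : measurable_map diag_Sig (fun _ : S -> Prop => True) diag_theta.
Proof. intros B _. exact (its_theta_meas U Logic.I). Qed.

Lemma copy_belief_intro i u A : diag_Sig A ->
  (forall w, diag_T i w = Delta_push Copy (T i u) -> A w) ->
  meas_val (Delta_push Copy (T i u)) A = 1.
Proof.
  intros HA H. apply (its_intro U i u _ HA).
  intros u' E. apply H. simpl. rewrite E. reflexivity.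
Qed.

Lemma echo_belief_intro L A : diag_Sig A ->
  (forall w, diag_T i2 w = echo_belief L -> A w) -> meas_val (echo_belief L) A = 1.
Proof.
  intros HA H.
  change (restrict diag_Sig (uniform (map (fun x => Echo x L) (elems L))) A = 1).
  rewrite restrict_in by exact HA. apply uniform_all; [discriminate |].
  intros w Hw. apply in_map_iff in Hw. destruct Hw as [x [<- _]].
  apply H, diag_T_Echo_i2.
Qed.

Lemma code_belief_intro i P A : i <> i2 -> diag_Sig A ->
  (forall w, diag_T i w = code_belief P -> A w) -> meas_val (code_belief P) A = 1.
Proof.
  intros Hi HA H.
  change (restrict diag_Sig (push (fun L => Code P L) (ultra_meas (code_filter P))) A = 1).
  rewrite restrict_in by exact HA. apply ind_eq1. destruct (code_filter_spec P) as [HF _].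
  refine (filter.filterS _ filter.filterT). intros L _. apply H, diag_T_Code, Hi.
Qed.

Lemma diag_T_intro i w A : diag_Sig A ->
  (forall w', diag_T i w' = diag_T i w -> A w') -> meas_val (diag_T i w) A = 1.
Proof.
  intros HA H. destruct w as [u | u L | P L].
  - apply copy_belief_intro; auto.
  - destruct (excluded_middle_informative (i = i2)) as [-> | Hi].
    + rewrite diag_T_Echo_i2 in *. apply echo_belief_intro; auto.
    + rewrite (diag_T_Echo i u L Hi) in *. apply copy_belief_intro; auto.
  - destruct (excluded_middle_informative (i = i2)) as [-> | Hi].
    + rewrite diag_T_Code_i2 in *. apply echo_belief_intro; auto.
    + rewrite (diag_T_Code i P L Hi) in *. apply (code_belief_intro i P A Hi); auto.
Qed.

Definition diag_space : InfTS S I := {|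
  its_M := point;
  its_ne := let (u) := its_ne U in inhabits (Copy u);
  its_Sig := diag_Sig;
  its_field := diag_Sig_field;
  its_T := diag_T;
  its_T_meas := diag_T_meas;
  its_intro := diag_T_intro;
  its_theta := diag_theta;
  its_theta_meas := diag_theta_meas |}.

End DiagonalSpace.

Arguments Copy {S I U} u.
Arguments Echo {S I U} u L.
Arguments Code {S I U} P L.

Section NoMorphism.
Context {S I : Type} {i1 i2 : I} {s0 t0 : S} {U : InfTS S I} {f : point U -> its_M U}.
Hypotheses (Hi : i1 <> i2) (Hs : s0 <> t0).
Hypothesis Hf : inf_type_morphism (diag_space i2 s0 t0 U) U f.

Local Notation M := (its_M U).
Local Notation TV := (diag_T i2 U).
Local Notation thV := (diag_theta s0 t0 U).

(* Beliefs at w and at [Copy (f w)] agree on the sets invariant under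
   [w |-> Copy (f w)]; comparing points only on such sets avoids inverting f. *)
Definition invariant (A : point U -> Prop) : Prop := forall w, A w <-> A (Copy (f w)).

Lemma diag_theta_Copy_f w : thV (Copy (f w)) = thV w.
Proof. destruct Hf as [_ [Hth _]]. symmetry. apply Hth. Qed.

Lemma diag_T_Copy_f i w A : invariant A ->
  meas_val (TV i (Copy (f w))) A = meas_val (TV i w) A.
Proof.
  intros HA. destruct Hf as [_ [_ HT]].
  change (meas_val (its_T U i (f w)) (fun u => A (Copy u)) = meas_val (TV i w) A).
  destruct (classic (its_Sig U (fun u => A (Copy u)))) as [HS | HS].
  - rewrite HT by exact HS. f_equal. apply pred_ext. intros w'. symmetry. apply HA.
  - rewrite (meas_val_out _ _ HS). exact (eq_sym (meas_val_out (TV i w) A HS)).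
Qed.

Definition agree (mu nu : Delta (diag_Sig U)) : Prop :=
  forall A, invariant A -> meas_val mu A = meas_val nu A.

Definition alike (w w' : point U) : Prop := thV w = thV w' /\ agree (TV i1 w) (TV i1 w').

Lemma alike_refl w : alike w w.
Proof. split; [reflexivity | intros A _; reflexivity]. Qed.

Lemma alike_sym {w w'} : alike w w' -> alike w' w.
Proof. intros [Hth Hag]. split; [auto | intros A HA; symmetry; auto]. Qed.

Lemma alike_trans {w w' w''} : alike w w' -> alike w' w'' -> alike w w''.
Proof.
  intros [Hth Hag] [Hth' Hag']. split; [congruence |].
  intros A HA. rewrite Hag, Hag'; auto.
Qed.

Lemma alike_Copy_f w : alike w (Copy (f w)).
Proof.
  split; [symmetry; apply diag_theta_Copy_f |].
  intros A HA. symmetry. apply diag_T_Copy_f, HA.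
Qed.

Definition twin (y : M) (w : point U) : Prop := alike w (Copy y).

Lemma twin_invariant y : invariant (twin y).
Proof.
  intros w. unfold twin. pose proof (alike_Copy_f w).
  split; intros H'; eauto using alike_trans, alike_sym.
Qed.

Lemma twin_meas y : diag_Sig U (twin y).
Proof.
  pose (F := fun E => exists A, invariant A /\ E = fun u => A (Copy u)).
  refine (inf_field_ext (inf_field_inter (its_field U)
    (its_theta_meas U (B := fun s => s = its_theta U y) Logic.I)
    (its_T_meas U i1 (Delta_field_agree_on (its_field U) F (its_T U i1 y)))) _).
  intros u. unfold twin, alike. simpl. split.
  - intros [Hth Hag]. split; [exact Hth |]. intros A HA. apply Hag. exists A. auto.
  - intros [Hth Hag]. split; [exact Hth |]. intros E [A [HA ->]]. apply Hag, HA.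
Qed.

Lemma twin_Echo y x L : twin y (Echo x L) <-> alike (Copy x) (Copy y).
Proof. unfold twin, alike. rewrite diag_T_Echo by exact Hi. reflexivity. Qed.

Definition admits_twin (y : M) (w : point U) : Prop := meas_val (TV i2 w) (twin y) > 0.

Lemma admits_twin_invariant y : invariant (admits_twin y).
Proof.
  intros w. unfold admits_twin. rewrite diag_T_Copy_f by apply twin_invariant.
  reflexivity.
Qed.

Lemma admits_twin_meas y : diag_Sig U (admits_twin y).
Proof. exact (its_T_meas U i2 (Delta_field_pos (its_field U) (twin_meas y))). Qed.

Lemma admits_twin_Code y P L :
  admits_twin y (Code P L) <-> exists x, In x (elems L) /\ alike (Copy x) (Copy y).
Proof.
  unfold admits_twin. rewrite diag_T_Code_i2.
  change (restrict (diag_Sig U) (uniform (map (fun x => Echo x L) (elems L))) (twin y) > 0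
    <-> exists x, In x (elems L) /\ alike (Copy x) (Copy y)).
  rewrite restrict_in, uniform_pos by (apply twin_meas || apply map_elems_neq_nil).
  split.
  - intros [w [Hw Hy]]. apply in_map_iff in Hw. destruct Hw as [x [<- Hx]].
    exists x. split; [exact Hx | exact (proj1 (twin_Echo y x L) Hy)].
  - intros [x [Hx Hy]]. exists (Echo x L).
    split; [apply (in_map (fun x => Echo x L)), Hx | exact (proj2 (twin_Echo y x L) Hy)].
Qed.

Definition alike_closed (P : M -> Prop) : Prop :=
  forall x y, alike (Copy x) (Copy y) -> P x -> P y.

Lemma Code_certain_admits_twin P L y : (exists z, P z) -> alike_closed P ->
  (meas_val (TV i1 (Code P L)) (admits_twin y) = 1 <-> P y).
Proof.
  intros HP Hcl. rewrite diag_T_Code by exact Hi.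
  change (restrict (diag_Sig U) (push (fun L => Code P L) (ultra_meas (code_filter U P)))
    (admits_twin y) = 1 <-> P y).
  rewrite restrict_in by apply admits_twin_meas. unfold push, ultra_meas. rewrite ind_eq1.
  destruct (code_filter_spec U P) as [HF Hcov].
  rewrite (pred_ext _ _ (fun L' => admits_twin_Code y P L')).
  rewrite (covering_exists_in filter.ultra_proper (Hcov HP)). split.
  - intros [x [Px Hx]]. exact (Hcl x y Hx Px).
  - intros Py. exists y. split; [exact Py | apply alike_refl].
Qed.

Lemma alike_Code_inj P Q L : alike_closed P -> alike_closed Q ->
  alike (Code P L) (Code Q L) -> forall y, P y <-> Q y.
Proof.
  intros HP HQ [Hth Hag] y. simpl in Hth.
  destruct (excluded_middle_informative (exists z, P z)) as [[p Pp] | nP];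
  destruct (excluded_middle_informative (exists z, Q z)) as [[q Qq] | nQ].
  - rewrite <- (Code_certain_admits_twin P L y), <- (Code_certain_admits_twin Q L y); eauto.
    rewrite (Hag _ (admits_twin_invariant y)). reflexivity.
  - congruence.
  - congruence.
  - split; intros H; exfalso; eauto.
Qed.

Lemma no_morphism_from_diag_space : False.
Proof.
  destruct (its_ne U) as [u].
  pose (g := fun P => f (Code P ((u, nil) : nelist M))).
  assert (Hinj : forall P Q, alike_closed P -> alike_closed Q ->
    alike (Copy (g P)) (Copy (g Q)) -> forall y, P y <-> Q y).
  { intros P Q HP HQ Hg. apply (alike_Code_inj P Q (u, nil)); auto.
    eauto using alike_trans, alike_sym, alike_Copy_f. }
  pose (D := fun x => exists P, alike_closed P /\ alike (Copy (g P)) (Copy x) /\ ~ P x).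
  assert (HD : alike_closed D).
  { intros x y Hxy [P [HP [Hg nPx]]]. exists P.
    split; [exact HP | split; [eauto using alike_trans |]].
    intros Py. apply nPx, (HP y x (alike_sym Hxy) Py). }
  destruct (classic (D (g D))) as [[P [HP [Hg nP]]] | nD].
  - apply nP, (Hinj P D HP HD Hg). exists P. auto.
  - apply nD. exists D. split; [exact HD | split; [apply alike_refl | exact nD]].
Qed.

End NoMorphism.

Lemma star_intro {S I : Type} (U : StarTS S I) i m (A : sts_M U -> Prop) :
  (forall m', sts_T U i m' = sts_T U i m -> A m') -> meas_val (sts_T U i m) A = 1.
Proof.
  intros H. pose proof (sts_intro U i m) as Hone.
  pose proof (meas_val_mono (powset_inf_field _) (sts_T U i m) Logic.I Logic.I H).
  pose proof (meas_val_le1 (powset_inf_field _) (sts_T U i m) A). lra.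
Qed.

Definition inf_of_star {S I : Type} (U : StarTS S I) : InfTS S I := {|
  its_M := sts_M U;
  its_ne := sts_ne U;
  its_Sig := @powset (sts_M U);
  its_field := powset_inf_field (sts_M U);
  its_T := sts_T U;
  its_T_meas := fun i B _ => Logic.I;
  its_intro := fun i m A _ => star_intro U i m A;
  its_theta := sts_theta U;
  its_theta_meas := fun B _ => Logic.I |}.

(* The σ-field of [diag_space i2 s0 t0 (inf_of_star U)] is the power set up to
   conversion, so its beliefs are beliefs of a *-type space, and the conversion
   also identifies [inf_of_star (star_diag_space i2 s0 t0 U)] with that space. *)
Definition star_diag_space {S I : Type} (i2 : I) (s0 t0 : S) (U : StarTS S I) :
  StarTS S I := {|
  sts_M := point (inf_of_star U);
  sts_ne := its_ne (diag_space i2 s0 t0 (inf_of_star U));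
  sts_T := diag_T i2 (inf_of_star U);
  sts_intro := fun i m => diag_T_intro i2 (inf_of_star U) i m _ Logic.I (fun m' E => E);
  sts_theta := diag_theta s0 t0 (inf_of_star U) |}.

Lemma inf_morphism_of_star {S I : Type} {V U : StarTS S I} {f} :
  star_type_morphism V U f -> inf_type_morphism (inf_of_star V) (inf_of_star U) f.
Proof.
  intros [Hth HT]. split; [intros B _; exact Logic.I |].
  split; [exact Hth | intros m E i _; apply HT].
Qed.

Theorem theorem4 (S I : Type)
  (HI : exists i j : I, i <> j) (HS : exists s t : S, s <> t) :
  (~ exists U : InfTS S I, inf_weak_universal U) /\
  (~ exists U : StarTS S I, star_weak_universal U).
Proof.
  destruct HI as [i1 [i2 Hi]], HS as [s0 [t0 Hs]]. split.
  - intros [U HU]. destruct (HU (diag_space i2 s0 t0 U)) as [f Hf].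
    exact (no_morphism_from_diag_space Hi Hs Hf).
  - intros [U HU]. destruct (HU (star_diag_space i2 s0 t0 U)) as [f Hf].
    exact (no_morphism_from_diag_space Hi Hs (inf_morphism_of_star Hf)).
Qed.
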